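(* Let $A\in\mathcal{B}(\Omega)$ with $c(A)>0$ and let $X\in\mathbb{L}^1(\Omega)$ satisfy $0\le XI_A\le M$ for a constant $M>0$. Then for each $\delta>0$, $\hat{\mathbb{E}}[(X+\delta)I_A]>\hat{\mathbb{E}}[XI_A]$.
   Context: $\Omega=C_0^d(\mathbb{R}^+)$ is the space of continuous paths from $[0,\infty)$ to $\mathbb{R}^d$ starting at $0$. $\mathcal{P}$ is a (weakly compact) set of probability measures on $(\Omega,\mathcal{B}(\Omega))$ representing the $G$-expectation. For $X\in L^0(\Omega)$ (Borel maps into $[-\infty,\infty]$) with $E_P[X]$ defined for all $P\in\mathcal{P}$, $\hat{\mathbb{E}}[X]:=\sup_{P\in\mathcal{P}}E_P[X]$; $c(A)=\sup_{P\in\mathcal{P}}P(A)$; $\mathbb{L}^1(\Omega)=\{X\in L^0(\Omega):\hat{\mathbb{E}}[|X|]<\infty\}$. *)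

From HB Require Import structures.
From mathcomp Require Import all_boot all_order all_algebra.
From mathcomp Require Import all_classical all_reals all_analysis.
From mathcomp Require Import measurable_realfun.
Set Implicit Arguments. Unset Strict Implicit. Unset Printing Implicit Defensive.
Import Order.TTheory GRing.Theory Num.Theory.
Import numFieldNormedType.Exports.
Local Open Scope classical_set_scope.
Local Open Scope ring_scope.

(* The canonical space Omega = C_0^d(R^+): continuous paths w : [0,oo) -> R^d
   with w(0) = 0.  A path is encoded as a function R -> R^d (row vectors) which
   is continuous and vanishes on (-oo,0]; this is a bijective encoding of
   C_0^d(R^+) (extend by 0 to the negative half-line). *)
Record cpath (R : realType) (d : nat) := CPath {
  cpval :> R -> 'rV[R]_d ;
  cpath_cont : continuous cpval ;
  cpath_zero : forall t : R, t <= 0 -> cpval t = 0 }.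

HB.instance Definition _ (R : realType) (d : nat) :=
  gen_eqMixin (cpath R d).
HB.instance Definition _ (R : realType) (d : nat) :=
  gen_choiceMixin (cpath R d).

Lemma cpath0_cont (R : realType) (d : nat) :
  continuous (fun _ : R => (0 : 'rV[R]_d)).
Proof. by move=> x; exact: cvg_cst. Qed.

Definition cpath0 (R : realType) (d : nat) : cpath R d :=
  @CPath R d (fun _ => 0) (@cpath0_cont R d) (fun _ _ => erefl).

HB.instance Definition _ (R : realType) (d : nat) :=
  isPointed.Build (cpath R d) (cpath0 R d).

(* Topology of uniform convergence on compacts: U is open iff around each of
   its points it contains a set {w' | sup_{t in [0,n]} |w'(t)-w(t)| < e}
   (coordinatewise sup-norm). *)
Definition lu_near (R : realType) (d : nat) (w : cpath R d) (n : nat) (e : R)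
  : set (cpath R d) :=
  [set w' : cpath R d | forall t : R, 0 <= t <= n%:R ->
      forall i : 'I_d, `|w' t ord0 i - w t ord0 i| < e].

Definition lu_open (R : realType) (d : nat) (U : set (cpath R d)) : Prop :=
  forall w, U w -> exists n : nat, exists2 e : R, 0 < e & lu_near w n e `<=` U.

Definition Omega (R : realType) (d : nat) :=
  g_sigma_algebraType (@lu_open R d).

Definition lu_continuous (R : realType) (d : nat) (f : Omega R d -> R) : Prop :=
  forall (w : Omega R d) (e : R), 0 < e ->
    exists n : nat, exists2 eta : R, 0 < eta &
      forall w' : Omega R d, lu_near w n eta w' -> `|f w' - f w| < e.

Definition bounded_fun (T : Type) (R : realType) (f : T -> R) : Prop :=
  exists M : R, forall x, `|f x| <= M.

Definition weak_cvg (R : realType) (d : nat)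
  (Pn : nat -> probability (Omega R d) R) (P : probability (Omega R d) R) : Prop :=
  forall f : Omega R d -> R, lu_continuous f -> bounded_fun f ->
    ((fun n => \int[Pn n]_w (f w)%:E) @ \oo --> \int[P]_w (f w)%:E)%E.

(* weak compactness (Omega is Polish, so the weak topology is metrizable and
   compactness is sequential compactness) *)
Definition weakly_compact (R : realType) (d : nat)
  (PP : set (probability (Omega R d) R)) : Prop :=
  forall Pn : nat -> probability (Omega R d) R, (forall n, PP (Pn n)) ->
    exists2 phi : nat -> nat, increasing_seq phi &
      exists2 P, PP P & weak_cvg (Pn \o phi) P.

Definition hatE (R : realType) (d : nat) (PP : set (probability (Omega R d) R))
  (X : Omega R d -> \bar R) : \bar R :=
  ereal_sup [set (\int[P]_w X w)%E | P in PP].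

Definition cap (R : realType) (d : nat) (PP : set (probability (Omega R d) R))
  (A : set (Omega R d)) : \bar R :=
  ereal_sup [set P A | P in PP].

Definition L1 (R : realType) (d : nat) (PP : set (probability (Omega R d) R))
  (X : Omega R d -> \bar R) : Prop :=
  measurable_fun [set: Omega R d] X /\ (hatE PP (fun w => `|X w|%E) < +oo)%E.

(* X * I_A with the convention (+-oo) * 0 = 0 *)
Definition mulInd (R : realType) (d : nat) (X : Omega R d -> \bar R)
  (A : set (Omega R d)) : Omega R d -> \bar R :=
  fun w => (X w * (\1_A w)%:E)%E.

From HB Require Import structures.
From mathcomp Require Import all_boot all_order all_algebra.
From mathcomp Require Import all_classical all_reals all_analysis.
From mathcomp Require Import measurable_realfun.
From mathcomp Require Import lra.
Import Order.TTheory GRing.Theory Num.Theory.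
Local Open Scope classical_set_scope.
Local Open Scope ring_scope.

(* Write s = E^[X I_A] and t = E^[(X + delta) I_A].  Since 0 <= X I_A <= M,
   on A we have X + delta >= (1 + delta/M) X, so t >= (1 + delta/M) s; and
   (X + delta) I_A >= delta I_A gives t >= delta c(A) > 0.  As s is finite,
   either s = 0 < t or s < (1 + delta/M) s <= t. *)

Section sublinear_expectation.
Local Open Scope ereal_scope.
Context {R : realType} {d : nat} {PP : set (probability (Omega R d) R)}.

Lemma hatE_ge_integral (P : probability (Omega R d) R) (f : Omega R d -> \bar R) :
  PP P -> \int[P]_w f w <= hatE PP f.
Proof. by move=> PPP; apply: ereal_sup_ubound; exists P. Qed.

Lemma hatE_ge0 {f : Omega R d -> \bar R} :
  PP !=set0 -> (forall w, 0 <= f w) -> 0 <= hatE PP f.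
Proof.
move=> [P PPP] f0; apply: le_trans _ (hatE_ge_integral P f PPP); exact: integral_ge0.
Qed.

Lemma hatE_le_bound {f : Omega R d -> \bar R} {M : R} :
  measurable_fun setT f -> (forall w, 0 <= f w <= M%:E) -> hatE PP f <= M%:E.
Proof.
move=> mf fM; apply: ge_ereal_sup => _ [P _ <-].
apply: (@le_trans _ _ (\int[P]_w (cst M%:E) w)).
  apply: ge0_le_integral => // w _; first by have /andP[] := fM w.
  by have /andP[] := fM w.
by rewrite integral_cst // -[leRHS]mule1 -(probability_setT P).
Qed.

Lemma hatE_pscale_le {c : R} {f g : Omega R d -> \bar R} :
  (0 < c)%R -> measurable_fun setT f -> measurable_fun setT g ->
  (forall w, 0 <= f w) -> (forall w, c%:E * f w <= g w) ->
  c%:E * hatE PP f <= hatE PP g.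
Proof.
move=> c0 mf mg f0 fg; rewrite -lee_pdivlMl //.
apply: ge_ereal_sup => _ [P PPP <-]; rewrite lee_pdivlMl //.
rewrite -ge0_integralZl //; last by rewrite lee_fin ltW.
apply: le_trans _ (hatE_ge_integral P g PPP); apply: ge0_le_integral => //.
- by move=> w _; rewrite mule_ge0 // lee_fin ltW.
- by apply: emeasurable_funM => //; exact: measurable_cst.
Qed.

Lemma hatE_indic (A : set (Omega R d)) :
  measurable A -> hatE PP (fun w => (\1_A w)%:E) = cap PP A.
Proof.
move=> mA; congr ereal_sup; apply/seteqP.
by split=> _ [P PPP <-]; exists P => //; rewrite integral_indic // setIT.
Qed.

Lemma cap_gt0_neq0 {A : set (Omega R d)} : 0 < cap PP A -> PP !=set0.
Proof.
move=> cA; apply/set0P/negP => /eqP PP0; move: cA.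
by rewrite /cap PP0 image_set0 ereal_sup0 ltNge leNye.
Qed.

End sublinear_expectation.

Section indicator_product.
Local Open Scope ereal_scope.
Context {R : realType} {d : nat}.
Implicit Types (X : Omega R d -> \bar R) (A : set (Omega R d)).

Lemma measurable_EFin_indic {A} :
  measurable A -> measurable_fun setT (fun w => (\1_A w)%:E : \bar R).
Proof. by move=> mA; exact/measurable_EFinP/measurable_indic. Qed.

Lemma measurable_mulInd X A :
  measurable A -> measurable_fun setT X -> measurable_fun setT (mulInd X A).
Proof. by move=> mA mX; apply: emeasurable_funM mX _; exact: measurable_EFin_indic. Qed.

Lemma mulInd_shiftE X A (c : R) (w : Omega R d) :
  mulInd (fun w => X w + c%:E) A w = mulInd X A w + (c * \1_A w)%:E.
Proof.
rewrite /mulInd /indic; case: (w \in A) => /=.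
  by rewrite !mule1 mulr1.
by rewrite !mule0 mulr0 adde0.
Qed.

Lemma mulInd_shift_ge_indic X A (c : R) (w : Omega R d) :
  0 <= mulInd X A w -> c%:E * (\1_A w)%:E <= mulInd (fun w => X w + c%:E) A w.
Proof. by move=> XA0; rewrite mulInd_shiftE -EFinM leeDr. Qed.

Lemma mulInd_shift_ge_scale X A (M c : R) (w : Omega R d) :
  (0 < M)%R -> (0 <= c)%R -> 0 <= mulInd X A w <= M%:E ->
  (1 + c / M)%:E * mulInd X A w <= mulInd (fun w => X w + c%:E) A w.
Proof.
move=> M0 c0; rewrite mulInd_shiftE /mulInd /indic.
case: (w \in A) => /=; last by rewrite !mule0 mulr0 adde0.
rewrite !mule1 mulr1; case: (X w) => [r| |] /andP[r0 rM] //.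
move: r0 rM; rewrite !lee_fin => r0 rM.
have cr : (c / M * r <= c)%R by rewrite mulrAC ler_pdivrMr //; nra.
have : ((1 + c / M) * r <= r + c)%R by lra.
by rewrite -lee_fin.
Qed.

End indicator_product.

Lemma lt_of_pscale_le (R : realType) (s t : \bar R) (k : R) :
  (0 < k)%R -> (0 <= s)%E -> (s < +oo)%E -> (0 < t)%E ->
  ((1 + k)%:E * s <= t)%E -> (s < t)%E.
Proof.
move=> k0; case: s => [r| |] //= r0 _ t0; rewrite lee_fin in r0.
have [->|r_gt0] := eqVneq r 0; first by [].
move=> /(lt_le_trans _); apply; rewrite -EFinM lte_fin.
have : (0 < r)%R by rewrite lt_neqAle eq_sym r_gt0.
nra.
Qed.

Theorem proposition3p6 (R : realType) (d : nat)
  (PP : set (probability (Omega R d) R)) (hPP : weakly_compact PP)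
  (A : set (Omega R d)) (mA : measurable A) (cA : (0 < cap PP A)%E)
  (X : Omega R d -> \bar R) (hX : L1 PP X)
  (M : R) (hM : 0 < M)
  (hXA : forall w, (0 <= mulInd X A w <= M%:E)%E) :
  forall delta : R, 0 < delta ->
    (hatE PP (mulInd (fun w => X w + delta%:E)%E A) > hatE PP (mulInd X A))%E.
Proof.
move=> delta delta0.
have XA0 w : (0 <= mulInd X A w)%E by have /andP[] := hXA w.
have mXA := measurable_mulInd X A mA hX.1.
have mXdA : measurable_fun setT (mulInd (fun w => X w + delta%:E)%E A).
  exact: measurable_mulInd _ _ mA (emeasurable_funD hX.1 (measurable_cst _)).
have mI := measurable_EFin_indic mA.
apply: (@lt_of_pscale_le _ _ _ (delta / M)).
- by rewrite divr_gt0.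
- exact: hatE_ge0 (cap_gt0_neq0 cA) XA0.
- exact: le_lt_trans (hatE_le_bound mXA hXA) (ltry _).
- apply: lt_le_trans (hatE_pscale_le delta0 mI mXdA _ _).
  + by rewrite hatE_indic // mule_gt0.
  + by move=> w; rewrite lee_fin.
  + by move=> w; exact: mulInd_shift_ge_indic.
- apply: hatE_pscale_le mXA mXdA XA0 _; first by rewrite ltr_wpDr ?divr_ge0 ?ltW.
  by move=> w; exact: mulInd_shift_ge_scale (ltW delta0) (hXA w).
Qed.
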